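(* Let $a\in \mathcal{A}$ have $w$-weighted core inverse $x$. Then $a$ has a $w$-weighted generalized core-EP inverse and $a^{\mathrm{gcEP},w}=x$.
   Context: $\mathcal{A}$ is a complex Banach *-algebra with identity and $w\in\mathcal{A}$. The $w$-weighted core inverse of $a$ is the unique $x$ with $a(wx)^2=x$, $(wawx)^*=wawx$, $xw(aw)^2=aw$. The $w$-weighted generalized core-EP inverse of $a$ is the unique $x$ with $a(wx)^2=x$, $(wawx)^*=wawx$, $\lim_{n\to\infty}\|(aw)^n-(xw)(aw)^{n+1}\|^{1/n}=0$, denoted $a^{\mathrm{gcEP},w}$. *)

From HB Require Import structures.
From mathcomp Require Import all_boot all_order all_algebra.
From mathcomp Require Import complex.
From mathcomp Require Import all_classical all_reals all_analysis.
Set Implicit Arguments. Unset Strict Implicit. Unset Printing Implicit Defensive.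
Import Order.TTheory GRing.Theory Num.Theory ComplexField.
Import numFieldNormedType.Exports.
Local Open Scope ring_scope.
Local Open Scope complex_scope.
Local Open Scope classical_set_scope.
Local Open Scope ring_scope.

(** A complex Banach *-algebra with identity: a complete normed space over
    the complex numbers C = R[i] (R the real numbers, any [realType]),
    equipped with an associative, C-bilinear multiplication [mul] with
    identity [one], whose norm is submultiplicative, and with an involution
    [star] (conjugate-linear, involutive, anti-multiplicative).
    (MathComp's ring hierarchy cannot be joined with the normed-module
    hierarchy without extra HB joins, so the algebra operations are given
    explicitly.) *)
HB.mixin Record isBanachStarAlgebra (R : realType) A
    of CompleteNormedModule R[i] A := {
  mul : A -> A -> A;
  one : A;
  mulA : forall x y z : A, mul x (mul y z) = mul (mul x y) z;
  mul1x : forall x : A, mul one x = x;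
  mulx1 : forall x : A, mul x one = x;
  mulDl : forall x y z : A, mul (x + y) z = mul x z + mul y z;
  mulDr : forall x y z : A, mul x (y + z) = mul x y + mul x z;
  mulZl : forall (c : R[i]) (x y : A), mul (c *: x) y = c *: mul x y;
  mulZr : forall (c : R[i]) (x y : A), mul x (c *: y) = c *: mul x y;
  norm_mul_le : forall x y : A, `|mul x y| <= `|x| * `|y|;
  star : A -> A;
  starK : forall x : A, star (star x) = x;
  starD : forall x y : A, star (x + y) = star x + star y;
  starZ : forall (c : R[i]) (x : A), star (c *: x) = (c^*)%C *: star x;
  starM : forall x y : A, star (mul x y) = mul (star y) (star x)
}.

#[short(type="banachStarAlgType")]
HB.structure Definition BanachStarAlgebra (R : realType) :=
  {A of CompleteNormedModule R[i] A & isBanachStarAlgebra R A}.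

Section Inverses.
Variables (R : realType) (A : banachStarAlgType R).

Definition mpow (x : A) (n : nat) : A := iter n (mul x) one.

(** The real number ||v|| (the norm of [A] takes values in R[i] and is real
    nonnegative; we take its real part). *)
Definition rnorm (v : A) : R := complex.Re `|v|.

Definition is_wcore (a w x : A) : Prop :=
  [/\ mul a (mpow (mul w x) 2) = x,
      star (mul (mul (mul w a) w) x) = mul (mul (mul w a) w) x
    & mul (mul x w) (mpow (mul a w) 2) = mul a w].

Definition is_wgcEP (a w x : A) : Prop :=
  [/\ mul a (mpow (mul w x) 2) = x,
      star (mul (mul (mul w a) w) x) = mul (mul (mul w a) w) x
    & (fun n : nat =>
         powR (rnorm (mpow (mul a w) n - mul (mul x w) (mpow (mul a w) n.+1)))
              (n%:R)^-1)
        @ \oo --> (0 : R)].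

End Inverses.

From Pilot Require Import Defs.
From HB Require Import structures.
From mathcomp Require Import all_boot all_order all_algebra.
From mathcomp Require Import complex.
From mathcomp Require Import all_classical all_reals all_analysis.
Import Order.TTheory GRing.Theory Num.Theory numFieldNormedType.Exports.
Local Open Scope classical_set_scope.
Local Open Scope ring_scope.

(* The third core-inverse axiom xw(aw)^2 = aw propagates to
   xw(aw)^(n+1) = (aw)^n for every n >= 1, so the sequence in the
   generalized core-EP condition is eventually 0. *)

Section WeightedInverses.
Context {R : realType} {A : banachStarAlgType R}.

Lemma mpowD (y : A) (m n : nat) : mpow y (m + n) = Defs.mul (mpow y m) (mpow y n).
Proof.
elim: m => [|m IH]; first by rewrite add0n /mpow /= Defs.mul1x.
by rewrite addSn /mpow /= -/(mpow y (m + n)) IH Defs.mulA.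
Qed.

Lemma mul_mpowS_id (z y : A) : Defs.mul z (mpow y 2) = y ->
  forall n, (0 < n)%N -> Defs.mul z (mpow y n.+1) = mpow y n.
Proof.
move=> zy2 [//|n] _.
by rewrite -addn2 addnC mpowD Defs.mulA zy2.
Qed.

Lemma root_rnorm_cvg0 (u : nat -> A) : (\forall n \near \oo, u n = 0) ->
  (fun n : nat => powR (rnorm (u n)) (n%:R)^-1) @ \oo --> (0 : R).
Proof.
move=> u0; apply: cvg_near_cst; near=> n.
have n_gt0 : (0 < n)%N by near: n; exists 1%N.
rewrite (near u0 n) // /rnorm normr0 /= powR0 //.
by rewrite invr_eq0 pnatr_eq0 -lt0n.
Unshelve. all: by end_near.
Qed.

End WeightedInverses.

Theorem corollary2p2 (R : realType) (A : banachStarAlgType R) (a w x : A) :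
  is_wcore a w x -> is_wgcEP a w x.
Proof.
case=> ax ws xaw; split=> //; apply: root_rnorm_cvg0.
near=> n; rewrite (mul_mpowS_id _ _ xaw) ?subrr //.
by near: n; exists 1%N.
Unshelve. all: by end_near.
Qed.
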